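(* Let $C\subseteq\mathbb{R}^n$ be a nonempty compact convex set and let $f:\mathbb{R}^n\to\mathbb{R}$ be an abs-smooth function such that, for every $x\in C$, its piecewise linearization $f_{PL,x}$ is convex on $C$. Let $\mathcal{C}_f$ be the curvature constant of $f$ on $C$ and let $x^*$ be a minimizer of $f$ on $C$. Let $x\in C$, $\alpha\in(0,1]$ and $\epsilon\ge0$ be arbitrary, and let $v\in C$ satisfy $$\Delta f(x;\alpha(v-x)) \le \min_{w\in C}\Delta f(x;\alpha(w-x)) + \tfrac12\epsilon\alpha^2\,\mathcal{C}_f .$$ Then $$f(x)-f(x^* ) \le \frac{-\Delta f(x;\alpha(v-x))}{\alpha} + \frac12\big(1+\alpha\epsilon\big)\mathcal{C}_f .$$
   Context: A function $f:\mathbb{R}^n\to\mathbb{R}$ is abs-smooth if it is locally Lipschitz and admits an abs-smooth form: for some $s\in\mathbb{N}\cup\{0\}$ there are $F=(F_1,\dots,F_s)\in\mathcal{C}^d(\mathbb{R}^{n+s+s},\mathbb{R}^s)$ and $\varphi\in\mathcal{C}^d(\mathbb{R}^{n+s},\mathbb{R})$ with $d\ge1$ such that $y=f(x)$ is computed by $z_i=F_i(x,z_1,\dots,z_{i-1},|z_1|,\dots,|z_{i-1}|)$ for $i=1,\dots,s$ and $y=\varphi(x,z)$. For a point $\mathring{x}$, write $\mathring z=z(\mathring x)$ and let $Z=\partial_x F$, $M=\partial_z F$, $L=\partial_{|z|}F$ (evaluated at $(\mathring x,\mathring z,|\mathring z|)$; $M,L$ strictly lower triangular), $a=\partial_x\varphi$,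 $b=\partial_z\varphi$ (evaluated at $(\mathring x,\mathring z)$). The piecewise linearization of $f$ at $\mathring x$ is $f_{PL,\mathring x}(x)=d_0+a^Tx+b^Tz$ where $z$ solves $z=c+Zx+Mz+L|z|$ (uniquely, recursively), with constants $c,d_0$ chosen so that $f_{PL,\mathring x}(\mathring x)=f(\mathring x)$ (namely $c=\mathring z-Z\mathring x-M\mathring z-L|\mathring z|$, $d_0=f(\mathring x)-a^T\mathring x-b^T\mathring z$). The abs-linearization is $\Delta f(\mathring x;x-\mathring x):=f_{PL,\mathring x}(x)-f(\mathring x)$. ''$f_{PL,x}$ convex on $C$'' means $f_{PL,x}(\lambda y+(1-\lambda)w)\le\lambda f_{PL,x}(y)+(1-\lambda)f_{PL,x}(w)$ for all $y,w\in C$, $\lambda\in[0,1]$. The curvature constant of $f$ on $C$ is $$\mathcal{C}_f:=\sup_{x,v\in C,\ \alpha\in(0,1],\ y=x+\alpha(v-x)}\frac{2}{\alpha^2}\big|f(y)-f(x)-\Delta f(x;y-x)\big|,$$ which is finite for compact $C$. *)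

From HB Require Import structures.
From mathcomp Require Import all_boot all_order all_algebra.
From mathcomp Require Import all_classical all_reals all_analysis.
Set Implicit Arguments.
Unset Strict Implicit.
Unset Printing Implicit Defensive.
Import Order.TTheory GRing.Theory Num.Theory.
Import numFieldNormedType.Exports.
Local Open Scope classical_set_scope.
Local Open Scope ring_scope.

Section AbsSmooth.
Variable R : realType.

Definition vabs (s : nat) (z : 'rV[R]_s) : 'rV[R]_s := map_mx (fun t => `|t|) z.

Definition xzw (n s : nat) (x : 'rV[R]_n) (z w : 'rV[R]_s) : 'rV[R]_(n + s + s) :=
  row_mx (row_mx x z) w.

(* C^1 on the whole space: differentiable everywhere and every directional
   derivative p |-> 'd G p v is continuous (in finite dimension this is
   continuity of p |-> 'd G p) *)
Definition C1 (V W : normedModType R) (G : V -> W) : Prop :=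
  (forall p, differentiable G p) /\ (forall v : V, continuous (fun p => 'd G p v)).

Definition lower_triangular_dep (n s : nat) (F : 'rV[R]_(n + s + s) -> 'rV[R]_s) : Prop :=
  forall (i : 'I_s) (x : 'rV[R]_n) (z w z' w' : 'rV[R]_s),
    (forall j : 'I_s, (j < i)%N -> z ord0 j = z' ord0 j /\ w ord0 j = w' ord0 j) ->
    F (xzw x z w) ord0 i = F (xzw x z' w') ord0 i.

(* (F, phi) is an abs-smooth form (with d = 1, which covers every d >= 1) *)
Definition abs_smooth_form (n s : nat) (F : 'rV[R]_(n + s + s) -> 'rV[R]_s)
    (phi : 'rV[R]_(n + s) -> R) : Prop :=
  [/\ C1 F, C1 phi & lower_triangular_dep F].

(* switching vector z(x): the recursion z_i = F_i(x, z_<i, |z_<i|), i = 1..s;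
   computed by s sweeps of z |-> F(x, z, |z|) (exact by lower triangularity) *)
Definition switching (n s : nat) (F : 'rV[R]_(n + s + s) -> 'rV[R]_s)
    (x : 'rV[R]_n) : 'rV[R]_s :=
  iter s (fun z => F (xzw x z (vabs z))) 0.

Definition represents (n s : nat) (f : 'rV[R]_n -> R)
    (F : 'rV[R]_(n + s + s) -> 'rV[R]_s) (phi : 'rV[R]_(n + s) -> R) : Prop :=
  forall x, f x = phi (row_mx x (switching F x)).

Definition locally_lipschitz (n : nat) (f : 'rV[R]_n -> R) : Prop :=
  forall x : 'rV[R]_n, exists2 r : R, 0 < r & exists L : R,
    forall y z, ball x r y -> ball x r z -> `|f y - f z| <= L * `|y - z|.

Definition abs_smooth (n : nat) (f : 'rV[R]_n -> R) : Prop :=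
  locally_lipschitz f /\
  exists s (F : 'rV[R]_(n + s + s) -> 'rV[R]_s) (phi : 'rV[R]_(n + s) -> R),
    abs_smooth_form F phi /\ represents f F phi.

(* With DF := 'd F (xo, zo, |zo|) one has Z x + M z + L w = DF (x, z, w),
   and with Dphi := 'd phi (xo, zo) one has a^T x + b^T z = Dphi (x, z). *)
Section PL.
Variables (n s : nat) (F : 'rV[R]_(n + s + s) -> 'rV[R]_s)
  (phi : 'rV[R]_(n + s) -> R) (f : 'rV[R]_n -> R) (xo : 'rV[R]_n).

Definition zo : 'rV[R]_s := switching F xo.
Definition DF : 'rV[R]_(n + s + s) -> 'rV[R]_s := 'd F (xzw xo zo (vabs zo)).
Definition Dphi : 'rV[R]_(n + s) -> R := 'd phi (row_mx xo zo).
Definition c_PL : 'rV[R]_s := zo - DF (xzw xo zo (vabs zo)).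
Definition d0_PL : R := f xo - Dphi (row_mx xo zo).
(* z solving z = c + Z x + M z + L |z| (s sweeps; exact since M, L are
   strictly lower triangular) *)
Definition z_PL (x : 'rV[R]_n) : 'rV[R]_s :=
  iter s (fun z => c_PL + DF (xzw x z (vabs z))) 0.
Definition f_PL (x : 'rV[R]_n) : R := d0_PL + Dphi (row_mx x (z_PL x)).
Definition absLin (d : 'rV[R]_n) : R := f_PL (xo + d) - f xo.
End PL.

Definition PL_convex_on (n s : nat) (F : 'rV[R]_(n + s + s) -> 'rV[R]_s)
    (phi : 'rV[R]_(n + s) -> R) (f : 'rV[R]_n -> R) (x : 'rV[R]_n)
    (C : set 'rV[R]_n) : Prop :=
  forall y w (lam : R), C y -> C w -> 0 <= lam <= 1 ->
    f_PL F phi f x (lam *: y + (1 - lam) *: w)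
      <= lam * f_PL F phi f x y + (1 - lam) * f_PL F phi f x w.

Definition convex_setR (n : nat) (C : set 'rV[R]_n) : Prop :=
  forall y w (lam : R), C y -> C w -> 0 <= lam <= 1 -> C (lam *: y + (1 - lam) *: w).

Definition curvature (n s : nat) (F : 'rV[R]_(n + s + s) -> 'rV[R]_s)
    (phi : 'rV[R]_(n + s) -> R) (f : 'rV[R]_n -> R) (C : set 'rV[R]_n) : \bar R :=
  ereal_sup [set r : \bar R | exists x v (alpha : R),
     [/\ C x, C v, 0 < alpha <= 1 &
      let y := x + alpha *: (v - x) in
      r = ((2 / alpha ^+ 2) * `|f y - f x - absLin F phi f x (y - x)|)%:E]].
End AbsSmooth.

From HB Require Import structures.
From mathcomp Require Import all_boot all_order all_algebra.
From mathcomp Require Import all_classical all_reals all_analysis.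
From mathcomp Require Import ring lra.
Import Order.TTheory GRing.Theory Num.Theory.
Import numFieldNormedType.Exports.
Local Open Scope classical_set_scope.
Local Open Scope ring_scope.

(* Convexity of f_PL,x along the segment from x to a point y of C gives
   Δf(x; α(y - x)) <= α Δf(x; y - x), since f_PL,x(x) = f(x); the curvature
   constant at step 1 bounds Δf(x; y - x) by f(y) - f(x) + C_f/2.  Combining
   this with the near-optimality of v and dividing by α gives the estimate,
   for any y in C.  The identity
   f_PL,x(x) = f(x) is itself read off a finite C_f: the quotient defining C_f
   at v = x is (2/α^2)|Δf(x; 0)|, which stays bounded as α -> 0 only if
   Δf(x; 0) = 0. *)

Lemma norm_le_sqr_eq0 (R : realFieldType) (t k : R) :
  (forall a, 0 < a <= 1 -> `|t| <= k * a ^+ 2) -> t = 0.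
Proof.
move=> le_t; have [//|t_neq0] := eqVneq t 0; exfalso.
have t_gt0 : 0 < `|t| by rewrite normr_gt0.
have t_le_k : `|t| <= k by have := le_t 1; rewrite ltr01 lexx expr1n mulr1; apply.
have k_gt0 : 0 < k := lt_le_trans t_gt0 t_le_k.
have a01 : 0 < `|t| / (4 * k) <= 1.
  by rewrite divr_gt0 ?mulr_gt0 //= ler_pdivrMr ?mulr_gt0 // mul1r; lra.
have := le_t _ a01.
have -> : k * (`|t| / (4 * k)) ^+ 2 = `|t| / 4 * (`|t| / (4 * k)).
  by field; rewrite gt_eqF.
case/andP: a01; set a := `|t| / (4 * k) => a_gt0 a_le1.
nra.
Qed.

Section CurvatureEstimates.
Local Set Implicit Arguments.
Local Unset Strict Implicit.
Variables (R : realType) (n s : nat) (F : 'rV[R]_(n + s + s) -> 'rV[R]_s)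
  (phi : 'rV[R]_(n + s) -> R) (f : 'rV[R]_n -> R) (C : set 'rV[R]_n).

Local Notation Df := (absLin F phi f).
Local Notation fPL := (f_PL F phi f).
Local Notation Cf := (curvature F phi f C).

Lemma le_curvature x v a : C x -> C v -> 0 < a <= 1 ->
  ((2 / a ^+ 2 * `|f (x + a *: (v - x)) - f x - Df x (a *: (v - x))|)%:E
    <= Cf)%E.
Proof.
move=> Cx Cv a01; apply: ereal_sup_ubound; exists x, v, a; split => //=.
by rewrite [x + _ - x]addrC addKr.
Qed.

Lemma curvature_neqNy x : C x -> Cf != -oo%E.
Proof.
move=> Cx; apply/negP => /eqP Cf_Ny.
have one01 : 0 < (1 : R) <= 1 by rewrite lexx ltr01.
by have := le_curvature Cx Cx one01; rewrite Cf_Ny leeNy_eq.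
Qed.

Lemma curvature_bound c x v a : Cf = c%:E -> C x -> C v -> 0 < a <= 1 ->
  `|f (x + a *: (v - x)) - f x - Df x (a *: (v - x))| <= c / 2 * a ^+ 2.
Proof.
move=> Cf_c Cx Cv a01; have := le_curvature Cx Cv a01.
rewrite Cf_c lee_fin; set t := `|_| => le_t.
have a_gt0 : 0 < a by case/andP: a01.
have -> : t = 2 / a ^+ 2 * t * (a ^+ 2 / 2) by field; rewrite gt_eqF.
apply: (le_trans (ler_wpM2r _ le_t)); first by rewrite divr_ge0 // exprn_ge0 // ltW.
by rewrite mulrA [c / 2 * _]mulrAC.
Qed.

Lemma f_PL_center c x : Cf = c%:E -> C x -> fPL x x = f x.
Proof.
move=> Cf_c Cx; apply/eqP; rewrite -subr_eq0.
rewrite -[X in fPL x X]addr0 -/(Df x 0).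
apply/eqP/(@norm_le_sqr_eq0 _ _ (c / 2)) => a a01.
have := curvature_bound Cf_c Cx Cx a01.
by rewrite subrr scaler0 addr0 subrr sub0r normrN.
Qed.

Lemma absLin_segment_le x w a : PL_convex_on F phi f x C ->
  fPL x x = f x -> C x -> C w -> 0 <= a <= 1 ->
  Df x (a *: (w - x)) <= a * Df x (w - x).
Proof.
move=> conv fPL_x Cx Cw a01; rewrite /absLin.
have -> : x + a *: (w - x) = a *: w + (1 - a) *: x.
  by rewrite scalerBr scalerBl scale1r addrCA.
have := conv w x a Cw Cx a01; rewrite fPL_x (addrC x) subrK mulrBl mul1r.
lra.
Qed.

Lemma primal_gap_le c x y v a delta : Cf = c%:E ->
  PL_convex_on F phi f x C -> C x -> C y -> 0 < a <= 1 ->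
  Df x (a *: (v - x)) <= Df x (a *: (y - x)) + delta ->
  f x - f y <= (- Df x (a *: (v - x)) + delta) / a + c / 2.
Proof.
move=> Cf_c conv Cx Cy a01 near_opt.
have [a_gt0 a_le1] := andP a01.
have a_ge0_le1 : 0 <= a <= 1 by rewrite (ltW a_gt0) a_le1.
have segment := absLin_segment_le conv (f_PL_center Cf_c Cx) Cx Cy a_ge0_le1.
have unit_step_le : Df x (y - x) <= f y - f x + c / 2.
  have one01 : 0 < (1 : R) <= 1 by rewrite lexx ltr01.
  have := curvature_bound Cf_c Cx Cy one01.
  rewrite !scale1r expr1n mulr1 (addrC x) subrK => le_c.
  by have := ler_norm (- (f y - f x - Df x (y - x))); rewrite normrN; lra.
rewrite -lerBlDr ler_pdivlMr //.
have : a * Df x (y - x) <= a * (f y - f x + c / 2).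
  by apply: ler_wpM2l; first exact: ltW.
nra.
Qed.

End CurvatureEstimates.

Theorem mainTheorem2 (R : realType) (n s : nat)
    (f : 'rV[R]_n -> R)
    (F : 'rV[R]_(n + s + s) -> 'rV[R]_s) (phi : 'rV[R]_(n + s) -> R)
    (C : set 'rV[R]_n) (xstar x v : 'rV[R]_n) (alpha eps : R) :
  locally_lipschitz f ->
  abs_smooth_form F phi -> represents f F phi ->
  C !=set0 -> compact C -> convex_setR C ->
  (forall y, C y -> PL_convex_on F phi f y C) ->
  C xstar -> (forall y, C y -> f xstar <= f y) ->
  C x -> 0 < alpha <= 1 -> 0 <= eps -> C v ->
  ((absLin F phi f x (alpha *: (v - x)))%:E
     <= ereal_inf [set (absLin F phi f x (alpha *: (w - x)))%:E | w in C]
        + (2^-1 * eps * alpha ^+ 2)%:E * curvature F phi f C)%E ->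
  ((f x - f xstar)%:E
     <= (- absLin F phi f x (alpha *: (v - x)) / alpha)%:E
        + (2^-1 * (1 + alpha * eps))%:E * curvature F phi f C)%E.
Proof.
move=> _ _ _ _ _ _ PL_conv Cxstar _ Cx alpha01 eps_ge0 _ near_opt.
have alpha_gt0 : 0 < alpha by case/andP: alpha01.
set D := absLin F phi f x (alpha *: (v - x)) in near_opt *.
case Cf_c: (curvature F phi f C) near_opt => [c| |] near_opt.
- have inf_le : (ereal_inf [set (absLin F phi f x (alpha *: (w - x)))%:E | w in C]
      <= (absLin F phi f x (alpha *: (xstar - x)))%:E)%E.
    by apply: ereal_inf_lbound; exists xstar.
  have := le_trans near_opt (leeD2r _ inf_le); rewrite -EFinM -EFinD lee_fin.
  move/(primal_gap_le Cf_c (PL_conv x Cx) Cx Cxstar alpha01).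
  rewrite -EFinM -EFinD lee_fin.
  have -> : - D / alpha + 2^-1 * (1 + alpha * eps) * c
      = (- D + 2^-1 * eps * alpha ^+ 2 * c) / alpha + c / 2.
    by field; rewrite gt_eqF.
  exact.
- rewrite gt0_muley ?addey ?leey // lte_fin.
  have : 0 <= alpha * eps by apply: mulr_ge0; first exact: ltW.
  lra.
- by have := curvature_neqNy F phi f Cx; rewrite Cf_c.
Qed.
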